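(* For all $i,j\in\{1,\dots,n\}$ the following relations hold in $(\mathcal{A}'/\mathrm{II},\diamond)$ (with summation over the repeated index $i$ in the last three): \begin{align*} \overline{\partial_i}\diamond\overline{\gamma^j}-\overline{\gamma^j}\diamond\overline{\partial_i}&=\tfrac1H\,\overline{\gamma_i}\diamond\overline{\partial^j},\\ \overline{\gamma^i}\diamond\overline{\gamma^j}+\overline{\gamma^j}\diamond\overline{\gamma^i}&=2\eta^{ij}\overline1+\tfrac{2}{H+1}\big(\overline{x^j}\diamond\overline{\partial^i}+\overline{x^i}\diamond\overline{\partial^j}\big),\\ \overline{\partial_i}\diamond\overline{x^j}-\overline{x^j}\diamond\overline{\partial_i}&=\delta_i^j\overline1+\tfrac1{2H}\,\overline{\gamma_i}\diamond\overline{\gamma^j}+\tfrac1{H+1}\,\overline{x_i}\diamond\overline{\partial^j},\\ \overline{\gamma^i}\diamond\overline{x^j}-\overline{x^j}\diamond\overline{\gamma^i}&=\tfrac1{H+1}\,\overline{x^i}\diamond\overline{\gamma^j},\\ \overline{x^i}\diamond\overline{\partial_i}&=\big(-\tfrac n2-H\big)\overline1,\\ \overline{\gamma^i}\diamond\overline{\partial_i}&=0,\\ \overline{\gamma_i}\diamond\overline{x^i}&=0. \end{align*}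
   Context: Fix $n\ge1$ and an invertible complex matrix $\eta=(\eta^{ij})$ with $\eta^{ij}=\eta^{ji}$ and inverse $(\eta_{ij})$. $\mathcal{A}=W(2n|n)$ is the associative superalgebra generated by even $x^1,\dots,x^n,\partial_1,\dots,\partial_n$ and odd $\gamma^1,\dots,\gamma^n$ with relations $x^ix^j=x^jx^i$, $\partial_i\partial_j=\partial_j\partial_i$, $\partial_ix^j-x^j\partial_i=\delta_i^j$, $\gamma^i$ commuting with all $x^j,\partial_j$, $\gamma^i\gamma^j+\gamma^j\gamma^i=2\eta^{ij}$. Repeated indices are summed; $x_i=\eta_{ij}x^j$, $\partial^i=\eta^{ij}\partial_j$, $\gamma_i=\eta_{ij}\gamma^j$. Set $X=\frac{\sqrt{-1}}{\sqrt2}\gamma^i\partial_i$, $Y=\frac{\sqrt{-1}}{\sqrt2}\gamma^ix_i$, $H=-\frac12(\partial_ix^i+x^i\partial_i)$, $E=-\frac12\partial^i\partial_i$, $F=\frac12x^ix_i$. Let $\mathcal{A}'$ be the localization of $\mathcal{A}$ at the multiplicative set generated by $\{H+k:k\in\mathbb{Z}\}$, $\mathrm{II}:=Y\mathcal{A}'+F\mathcal{A}'+\mathcal{A}'X+\mathcal{A}'E$, and $\overline a:=a+\mathrm{II}$. Define $\kappa_k(t)=-k/2$ for $k$ even, $\kappa_k(t)=t+\frac{k+1}2$ for $k$ odd, $\varphi_k(t)=\prod_{l=1}^k\frac{(-1)^l}{\kappa_l(t)}$. The diamond product is $\overline a\diamond\overline b:=\sum_{k\ge0}a\varphi_k(H)Y^kX^kb+\mathrm{II}$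 (all but finitely many terms lie in $\mathrm{II}$); it is associative. For a rational function $\phi$ with $\phi(H)\in\mathcal{A}'$ one writes $\phi(H)\,\overline a:=\overline{\phi(H)a}$ $(=\overline{\phi(H)}\diamond\overline a)$, e.g. $\frac1H\overline{a}=\overline{H^{-1}a}$. *)

(* W(2n|n) and its localization are modelled through an
   arbitrary complex unital algebra B containing elements x^i, d_i (=\partial_i),
   g^i (=\gamma^i) satisfying the defining relations of W(2n|n) and in which
   all H + k (k integer) are invertible. *)
From mathcomp Require Import all_boot all_algebra.
From mathcomp Require Import reals complex.
Set Implicit Arguments.
Unset Strict Implicit.
Unset Printing Implicit Defensive.
Import GRing.Theory Num.Theory.
Local Open Scope ring_scope.

Section WeylClifford.
Variables (R : realType) (n : nat) (eta : 'M[R[i]]_n) (B : unitAlgType R[i]).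
Variables (x d g : 'I_n -> B).

Definition WC_relations : Prop :=
  [/\ forall i j, x i * x j = x j * x i,
      forall i j, d i * d j = d j * d i,
      forall i j, d i * x j - x j * d i = (i == j)%:R,
      forall i j, g i * x j = x j * g i /\ g i * d j = d j * g i
    & forall i j, g i * g j + g j * g i = (2 * eta i j)%:A].

Definition etainv : 'M[R[i]]_n := invmx eta.

(* lowered / raised indices *)
Definition xl (i : 'I_n) : B := \sum_j etainv i j *: x j.
Definition gl (i : 'I_n) : B := \sum_j etainv i j *: g j.
Definition du (i : 'I_n) : B := \sum_j eta i j *: d j.

Definition cXY : R[i] := sqrtC (-1) / sqrtC 2.

Definition X : B := cXY *: \sum_i g i * d i.
Definition Y : B := cXY *: \sum_i g i * xl i.
Definition H : B := - (1 / 2 : R[i]) *: \sum_i (d i * x i + x i * d i).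
Definition E : B := - (1 / 2 : R[i]) *: \sum_i du i * d i.
Definition F : B := (1 / 2 : R[i]) *: \sum_i x i * xl i.

Definition kappaH (l : nat) : B :=
  if odd l then H + ((l.+1)./2)%:R else (- (l%:R / 2 : R[i]))%:A.
Definition phiH (k : nat) : B :=
  \prod_(1 <= l < k.+1) ((-1) ^+ l * (kappaH l)^-1).

Definition inII (u : B) : Prop :=
  exists p q r s : B, u = Y * p + F * q + r * X + s * E.

(* truncation at N of the series a phi_k(H) Y^k X^k b defining abar <> bbar *)
Definition dmd (N : nat) (a b : B) : B :=
  \sum_(k < N) a * phiH k * Y ^+ k * X ^+ k * b.

End WeylClifford.

From mathcomp Require Import all_boot all_algebra.
From mathcomp Require Import reals complex.
Set Implicit Arguments.
Unset Strict Implicit.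
Unset Printing Implicit Defensive.
Import GRing.Theory Num.Theory.
Local Open Scope ring_scope.

(* Everything is computed modulo J = Y A' + A' X, which lies in II.  Since
   H Y = Y (H - 1), every (H + k)^-1, hence every phi_k(H), moves through
   powers of Y at the cost of a shift.  Moving a generator a to the right of
   Y lowers it along d -> gamma -> x -> 0, so a Y^k lies in Y A' once k reaches
   its degree (3 for d, 2 for gamma, 1 for x), and symmetrically X^k b lies in
   A' X (1 for d, 2 for gamma).  Hence in a <> b of two generators only the
   terms k <= 2 survive, and these are computed from the commutation relations
   of the generators with X and Y; the seven relations then follow by
   rearranging, using H^-1 = H^-1 (H + 1)^-1 + (H + 1)^-1 for the third. *)

Section LinearCombinations.
Variables (K : comPzRingType) (A : algType K) (I : finType).

Lemma mulr_lincombr (a : A) (s : I -> K) (f : I -> A) :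
  a * (\sum_l s l *: f l) = \sum_l s l *: (a * f l).
Proof. by rewrite mulr_sumr; apply: eq_bigr => l _; rewrite scalerAr. Qed.

Lemma mulr_lincombl (a : A) (s : I -> K) (f : I -> A) :
  (\sum_l s l *: f l) * a = \sum_l s l *: (f l * a).
Proof. by rewrite mulr_suml; apply: eq_bigr => l _; rewrite scalerAl. Qed.

Lemma commr_lincomb (a : A) (s : I -> K) (f : I -> A) :
  (forall l, GRing.comm a (f l)) -> GRing.comm a (\sum_l s l *: f l).
Proof.
by move=> af; rewrite /GRing.comm mulr_lincombr mulr_lincombl; apply: eq_bigr => l _; rewrite af.
Qed.

Lemma sum_delta_scale (f : I -> A) j : \sum_l ((j == l)%:R : K) *: f l = f j.
Proof.
rewrite (bigD1 j) //= eqxx scale1r big1 ?addr0 // => l /negbTE.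
by rewrite eq_sym => ->; rewrite scale0r.
Qed.

Lemma mulr_scale2 (t u w : A) (s1 s2 : K) :
  t * (s1 *: u) * (s2 *: w) = (s1 * s2) *: (t * u * w).
Proof. by rewrite -!scalerAr -scalerAl scalerA mulrC. Qed.

End LinearCombinations.

Lemma conj_inv (A : unitRingType) (u a v : A) :
  u * a = a * v -> u \is a GRing.unit -> v \is a GRing.unit -> u^-1 * a = a * v^-1.
Proof.
move=> uav uU vU; apply: (canRL (mulrK vU)).
by rewrite -mulrA -uav mulrA mulVr ?mul1r.
Qed.

Section DiamondSeries.
Variables (K : comPzRingType) (A : algType K) (Y X : A).

Definition inJ (u : A) : Prop := exists p r, u = Y * p + r * X.
Definition eqJ (u v : A) : Prop := inJ (u - v).
Definition Ymovable (t : A) : Prop := forall k, exists w, t * Y ^+ k = Y ^+ k * w.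

Lemma inJ_Y p : inJ (Y * p). Proof. by exists p, 0; rewrite mul0r addr0. Qed.
Lemma inJ_X r : inJ (r * X). Proof. by exists 0, r; rewrite mulr0 add0r. Qed.
Lemma inJ0 : inJ 0. Proof. by have := inJ_Y 0; rewrite mulr0. Qed.

Lemma inJD u v : inJ u -> inJ v -> inJ (u + v).
Proof.
move=> [p [r ->]] [p' [r' ->]]; exists (p + p'), (r + r').
by rewrite mulrDr mulrDl addrACA.
Qed.

Lemma inJN u : inJ u -> inJ (- u).
Proof. by move=> [p [r ->]]; exists (- p), (- r); rewrite opprD mulrN mulNr. Qed.

Lemma inJ_sum (I : finType) (F : I -> A) : (forall i, inJ (F i)) -> inJ (\sum_i F i).
Proof. by move=> FJ; elim/big_ind: _ => //; [exact: inJ0 | exact: inJD]. Qed.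

Lemma inJ_mull t u : Ymovable t -> inJ u -> inJ (t * u).
Proof.
move=> /(_ 1%N) [t']; rewrite expr1 => tY [p [r ->]].
by exists (t' * p), (t * r); rewrite mulrDr !mulrA tY.
Qed.

Lemma eqJ_refl u : eqJ u u. Proof. by rewrite /eqJ subrr; exact: inJ0. Qed.

Lemma eqJ_sym u v : eqJ u v -> eqJ v u.
Proof. by rewrite /eqJ => /inJN; rewrite opprB. Qed.

Lemma eqJ_trans v u w : eqJ u v -> eqJ v w -> eqJ u w.
Proof. by rewrite /eqJ => uv vw; have := inJD uv vw; rewrite addrA subrK. Qed.

Lemma eqJ_add u u' v v' : eqJ u u' -> eqJ v v' -> eqJ (u + v) (u' + v').
Proof. by rewrite /eqJ => uu vv; have := inJD uu vv; rewrite opprD addrACA. Qed.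

Lemma eqJ_sub u u' v v' : eqJ u u' -> eqJ v v' -> eqJ (u - v) (u' - v').
Proof. by move=> uu /inJN vv; apply: eqJ_add uu _; rewrite /eqJ -opprD. Qed.

Lemma eqJ_mull t u u' : Ymovable t -> eqJ u u' -> eqJ (t * u) (t * u').
Proof. by rewrite /eqJ -mulrBr; exact: inJ_mull. Qed.

Lemma eqJ_sum (I : finType) (F G : I -> A) :
  (forall i, eqJ (F i) (G i)) -> eqJ (\sum_i F i) (\sum_i G i).
Proof. by rewrite /eqJ -sumrB; exact: inJ_sum. Qed.

Lemma eqJ_inJ u v : eqJ u v -> inJ v -> inJ u.
Proof. by rewrite /eqJ => uv vJ; have := inJD uv vJ; rewrite subrK. Qed.

Lemma eqJ_congr u u' v v' : eqJ u u' -> eqJ v v' -> u' = v' -> eqJ u v.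
Proof. by move=> uu vv e; apply: eqJ_trans uu _; rewrite e; exact: eqJ_sym. Qed.

Lemma Ymovable_comm t : GRing.comm t Y -> Ymovable t.
Proof. by move=> tY k; exists t; exact: commrX. Qed.

Lemma Ymovable_mul t u : Ymovable t -> Ymovable u -> Ymovable (t * u).
Proof.
move=> tY uY k; have [w uw] := uY k; have [w' tw'] := tY k.
by exists (w' * w); rewrite -mulrA uw !mulrA tw'.
Qed.

Lemma YmovableN t : Ymovable t -> Ymovable (- t).
Proof. by move=> tY k; have [w tw] := tY k; exists (- w); rewrite mulNr tw mulrN. Qed.

Lemma YmovableZ s t : Ymovable t -> Ymovable (s *: t).
Proof. by move=> tY k; have [w tw] := tY k; exists (s *: w); rewrite -scalerAl tw scalerAr. Qed.

Definition absorbY k (a : A) : Prop := exists p, a * Y ^+ k = Y * p.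
Definition absorbX k (b : A) : Prop := exists r, X ^+ k * b = r * X.

Lemma absorbYZ k s a : absorbY k a -> absorbY k (s *: a).
Proof. by move=> [p ap]; exists (s *: p); rewrite -scalerAl ap scalerAr. Qed.

Lemma absorbXZ k s b : absorbX k b -> absorbX k (s *: b).
Proof. by move=> [r br]; exists (s *: r); rewrite -scalerAr br scalerAl. Qed.

Lemma absorbYS k a p v : a * Y = Y * p + v -> absorbY k v -> absorbY k.+1 a.
Proof.
move=> aY [q vq]; exists (p * Y ^+ k + q).
by rewrite exprS mulrA aY mulrDl -mulrA vq mulrDr.
Qed.

Lemma absorbXS k b r z : X * b = r * X + z -> absorbX k z -> absorbX k.+1 b.
Proof.
move=> Xb [q zq]; exists (X ^+ k * r + q).
by rewrite exprSr -mulrA Xb mulrDr mulrA zq mulrDl.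
Qed.

Lemma absorbY_le k l a : (k <= l)%N -> absorbY k a -> absorbY l a.
Proof.
move=> /subnKC <- [p ap]; exists (p * Y ^+ (l - k)).
by rewrite exprD mulrA ap mulrA.
Qed.

Lemma absorbX_le k l b : (k <= l)%N -> absorbX k b -> absorbX l b.
Proof.
move=> /subnK <- [r br]; exists (X ^+ (l - k) * r).
by rewrite exprD -mulrA br mulrA.
Qed.

Lemma Ycomm_scale s a p v :
  a * Y = Y * p + v -> (s *: a) * Y = Y * (s *: p) + s *: v.
Proof. by move=> aY; rewrite -scalerAl aY scalerDr scalerAr. Qed.

Lemma Xcomm_scale s b r z :
  X * b = r * X + z -> X * (s *: b) = (s *: r) * X + s *: z.
Proof. by move=> Xb; rewrite -scalerAr Xb scalerDr scalerAl. Qed.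

Variable phi : nat -> A.

Definition term k (a b : A) : A := a * phi k * Y ^+ k * X ^+ k * b.
Definition series N (a b : A) : A := \sum_(k < N) term k a b.

Hypothesis phi_movable : forall k, Ymovable (phi k).

Lemma term_absorbY k l a b : (k <= l)%N -> absorbY k a -> inJ (term l a b).
Proof.
move=> kl /(absorbY_le kl) [p ap]; have [w phiw] := phi_movable l l.
by rewrite /term -(mulrA a) phiw mulrA ap -!mulrA; exact: inJ_Y.
Qed.

Lemma term_absorbX k l a b : (k <= l)%N -> absorbX k b -> inJ (term l a b).
Proof.
by move=> kl /(absorbX_le kl) [r br]; rewrite /term -mulrA br mulrA; exact: inJ_X.
Qed.

Lemma series_absorb k N a b : (k <= N)%N -> absorbY k a \/ absorbX k b ->
  eqJ (series N a b) (series k a b).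
Proof.
move=> kN ab; rewrite /eqJ /series -(subnKC kN) big_split_ord /= addrAC subrr add0r.
apply: inJ_sum => l; case: ab => [aY | bX].
  exact: term_absorbY (leq_addr _ _) aY.
exact: term_absorbX (leq_addr _ _) bX.
Qed.

Lemma term_reduce k a b psi p v r z :
  a * phi k = psi * a -> Ymovable psi ->
  a * Y ^+ k = Y * p + v -> X ^+ k * b = r * X + z ->
  eqJ (term k a b) (psi * v * z).
Proof.
move=> aphi /(_ 1%N) [psi']; rewrite expr1 => psiY aY Xb.
have -> : term k a b = Y * (psi' * p * (r * X + z)) + psi * v * r * X + psi * v * z.
  rewrite /term aphi -(mulrA psi a) aY -(mulrA _ (X ^+ k) b) Xb.
  by rewrite [psi * _]mulrDr mulrA psiY mulrDl [psi * v * _]mulrDr !mulrA addrA.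
by rewrite /eqJ addrK; apply: inJD; [exact: inJ_Y | exact: inJ_X].
Qed.

Lemma term1_reduce a b psi p v r z :
  a * phi 1 = psi * a -> Ymovable psi ->
  a * Y = Y * p + v -> X * b = r * X + z ->
  eqJ (term 1 a b) (psi * v * z).
Proof. by move=> aphi psiY aY Xb; apply: (@term_reduce 1 _ _ _ p _ r); rewrite ?expr1. Qed.

Lemma term2_reduce a b psi p v p' v' r z r' z' :
  a * phi 2 = psi * a -> Ymovable psi ->
  a * Y = Y * p + v -> v * Y = Y * p' + v' ->
  X * b = r * X + z -> X * z = r' * X + z' ->
  eqJ (term 2 a b) (psi * v' * z').
Proof.
move=> aphi psiY aY vY Xb Xz; apply: (@term_reduce 2 _ _ _ (p * Y + p') _ (X * r + r')) => //.
  by rewrite expr2 mulrA aY mulrDl -mulrA vY mulrDr addrA mulrA.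
by rewrite expr2 -mulrA Xb mulrDr mulrA Xz addrA mulrDl.
Qed.

End DiamondSeries.

Arguments eqJ_refl {K A Y X} u.

Section WeylCliffordDiamond.
Variables (R : realType) (n : nat) (eta : 'M[R[i]]_n) (B : unitAlgType R[i]).
Variables (x d g : 'I_n -> B).

Local Notation Xo := (X d g).
Local Notation Yo := (Y eta x g).
Local Notation Ho := (H x d).
Local Notation c := (cXY R).
Local Notation ei := (etainv eta).
Local Notation x_ := (xl eta x).
Local Notation g_ := (gl eta g).
Local Notation dU := (du eta d).
Local Notation inJ := (inJ Yo Xo).
Local Notation eqJ := (eqJ Yo Xo).
Local Notation Ymovable := (Ymovable Yo).
Local Notation absorbY := (absorbY Yo).
Local Notation absorbX := (absorbX Xo).
Local Notation term := (term Yo Xo (phiH x d)).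
Local Notation series := (series Yo Xo (phiH x d)).

Lemma inJ_inII u : inJ u -> inII eta x d g u.
Proof. by move=> [p [r ->]]; exists p, 0, r, 0; rewrite !mulr0 !mul0r !addr0. Qed.

Lemma cXY_sqr : c * c = - (1 / 2).
Proof. by rewrite /cXY -expr2 expr_div_n !sqrtCK mulNr. Qed.

Lemma cXY_double : c * (2 * c) = -1.
Proof. by rewrite mulrCA cXY_sqr mulrN mul1r divff ?pnatr_eq0. Qed.

Lemma cXY_neq0 : c != 0.
Proof. by rewrite /cXY mulf_neq0 ?invr_eq0 ?sqrtC_eq0 ?oppr_eq0 ?oner_eq0 ?pnatr_eq0. Qed.

Hypotheses (eta_symmetric : eta^T = eta) (eta_unit : eta \in unitmx).

Lemma eta_sym i j : eta i j = eta j i.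
Proof. by rewrite -{1}eta_symmetric mxE. Qed.

Lemma etainv_sym i j : ei i j = ei j i.
Proof. by rewrite /etainv -{1}eta_symmetric -trmx_inv mxE. Qed.

Lemma raise_xl j : \sum_m eta j m *: x_ m = x j.
Proof.
have eta_etainv l : \sum_m eta j m * ei m l = (j == l)%:R.
  by have := congr1 (fun M : 'M[R[i]]_n => M j l) (mulmxV eta_unit); rewrite !mxE.
under eq_bigr => m _ do rewrite scaler_sumr.
rewrite exchange_big /=.
under eq_bigr => l _ do rewrite (eq_bigr _ (fun m _ => scalerA _ _ _)) -scaler_suml eta_etainv.
exact: sum_delta_scale.
Qed.

Lemma sum_gl_x : \sum_m g_ m * x m = \sum_m g m * x_ m.
Proof.
under eq_bigr => m _ do rewrite mulr_lincombl.
under [RHS]eq_bigr => m _ do rewrite mulr_lincombr.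
by rewrite exchange_big /=; apply: eq_bigr => a _; apply: eq_bigr => b _; rewrite etainv_sym.
Qed.

Hypothesis relations : WC_relations eta x d g.

Lemma xx_comm i j : x i * x j = x j * x i. Proof. by case: relations. Qed.
Lemma dd_comm i j : d i * d j = d j * d i. Proof. by case: relations. Qed.

Lemma dx_comm i j : d i * x j = x j * d i + (i == j)%:R.
Proof. by case: relations => _ _ <- _ _; rewrite addrC subrK. Qed.

Lemma gx_comm i j : g i * x j = x j * g i.
Proof. by case: relations => _ _ _ /(_ i j) []. Qed.

Lemma gd_comm i j : g i * d j = d j * g i.
Proof. by case: relations => _ _ _ /(_ i j) []. Qed.

Lemma gg_anticomm i j : g i * g j = (2 * eta i j)%:A - g j * g i.
Proof. by case: relations => _ _ _ _ <-; rewrite addrK. Qed.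

(** * Commutation with X and Y *)

Lemma g_xl_comm i m : GRing.comm (g i) (x_ m).
Proof. by apply: commr_lincomb => l; exact: gx_comm. Qed.

Lemma x_xl_comm i m : GRing.comm (x i) (x_ m).
Proof. by apply: commr_lincomb => l; exact: xx_comm. Qed.

Lemma x_gl_comm i m : GRing.comm (x i) (g_ m).
Proof. by apply: commr_lincomb => l; exact/esym/gx_comm. Qed.

Lemma d_xl i m : d i * x_ m = x_ m * d i + (ei m i)%:A.
Proof.
rewrite mulr_lincombr (eq_bigr _ (fun l _ => congr1 _ (dx_comm i l))).
rewrite (eq_bigr _ (fun l _ => scalerDr _ _ _)) big_split /= -mulr_lincombl.
congr (_ + _); rewrite (bigD1 i) //= eqxx big1 ?addr0 // => l /negbTE.
by rewrite eq_sym => ->; rewrite scaler0.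
Qed.

Lemma x_Y i : x i * Yo = Yo * x i.
Proof.
rewrite /Y -scalerAr -scalerAl mulr_sumr mulr_suml; congr (_ *: _).
by apply: eq_bigr => m _; rewrite mulrA -gx_comm -mulrA x_xl_comm mulrA.
Qed.

Lemma xl_Y i : x_ i * Yo = Yo * x_ i.
Proof. by apply/esym/commr_lincomb => l; exact/esym/x_Y. Qed.

Lemma g_Y j : g j * Yo = Yo * (- g j) + (2 * c) *: x j.
Proof.
have gY m : g j * (g m * x_ m) = 2 *: (eta j m *: x_ m) - (g m * x_ m) * g j.
  by rewrite mulrA gg_anticomm mulrBl mulr_algl scalerA -!mulrA g_xl_comm.
rewrite /Y -scalerAr mulr_sumr (eq_bigr _ (fun m _ => gY m)) sumrB.
rewrite -scaler_sumr raise_xl -mulr_suml.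
by rewrite scalerBr addrC -scalerAl scalerA [c * 2]mulrC mulrN scalerN.
Qed.

Lemma gl_Y i : g_ i * Yo = Yo * (- g_ i) + (2 * c) *: x_ i.
Proof.
rewrite mulr_lincombl mulrN mulr_lincombr -sumrN scaler_sumr -big_split /=.
by apply: eq_bigr => l _; rewrite g_Y scalerDr mulrN scalerN !scalerA mulrC.
Qed.

Lemma d_Y i : d i * Yo = Yo * d i + c *: g_ i.
Proof.
rewrite /Y -scalerAr -scalerAl -scalerDr; congr (_ *: _).
have dY m : d i * (g m * x_ m) = (g m * x_ m) * d i + ei i m *: g m.
  by rewrite mulrA -gd_comm -mulrA d_xl mulrDr mulrA mulr_algr etainv_sym.
by rewrite mulr_sumr (eq_bigr _ (fun m _ => dY m)) big_split /= mulr_suml.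
Qed.

Lemma X_d j : Xo * d j = d j * Xo.
Proof.
rewrite /X -scalerAr -scalerAl mulr_sumr mulr_suml; congr (_ *: _).
by apply: eq_bigr => m _; rewrite -mulrA dd_comm !mulrA gd_comm.
Qed.

Lemma X_du j : Xo * dU j = dU j * Xo.
Proof. by apply: commr_lincomb => l; exact: X_d. Qed.

Lemma X_g j : Xo * g j = (- g j) * Xo + (2 * c) *: dU j.
Proof.
have gdg m : (g m * d m) * g j = 2 *: (eta j m *: d m) - g j * (g m * d m).
  by rewrite -mulrA -gd_comm mulrA gg_anticomm mulrBl mulr_algl scalerA eta_sym -!mulrA.
rewrite /X -scalerAl mulr_suml (eq_bigr _ (fun m _ => gdg m)) sumrB.
rewrite -scaler_sumr -mulr_sumr.
by rewrite scalerBr addrC -scalerAr scalerA [c * 2]mulrC mulNr scalerN.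
Qed.

Lemma X_x j : Xo * x j = x j * Xo + c *: g j.
Proof.
rewrite /X -scalerAr -scalerAl -scalerDr; congr (_ *: _).
have gdx m : (g m * d m) * x j = x j * (g m * d m) + ((j == m)%:R : R[i]) *: g m.
  rewrite -mulrA dx_comm mulrDr mulrA gx_comm -mulrA eq_sym; congr (_ + _).
  by rewrite mulr_natr -scaler_nat.
rewrite mulr_suml (eq_bigr _ (fun m _ => gdx m)) big_split /= mulr_sumr.
by rewrite sum_delta_scale.
Qed.

(** * The Euler operator and H *)

Definition euler : B := \sum_m x m * d m.

Lemma H_euler : Ho = - euler - (n%:R / 2 : R[i])%:A.
Proof.
have dxxd m : d m * x m + x m * d m = 2 *: (x m * d m) + 1 *: 1.
  by rewrite dx_comm eqxx scale1r scaler_nat mulr2n addrC addrA.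
rewrite /H (eq_bigr _ (fun m _ => dxxd m)) big_split /= -!scaler_sumr sumr_const card_ord.
rewrite scale1r -(scaler_nat n (1 : B)) scalerDr !scalerA mulNr mul1r.
by rewrite mulVf ?pnatr_eq0 // scaleN1r mulNr mulrC scaleNr.
Qed.

Lemma d_euler i : d i * euler = euler * d i + d i.
Proof.
have dxd m : d i * (x m * d m) = (x m * d m) * d i + ((i == m)%:R : R[i]) *: d m.
  by rewrite mulrA dx_comm mulrDl -!mulrA dd_comm mulr_natl -scaler_nat.
by rewrite mulr_sumr mulr_suml (eq_bigr _ (fun m _ => dxd m)) big_split /= sum_delta_scale.
Qed.

Lemma g_euler i : GRing.comm (g i) euler.
Proof.
rewrite /GRing.comm mulr_sumr mulr_suml; apply: eq_bigr => m _.
by rewrite mulrA gx_comm -mulrA gd_comm mulrA.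
Qed.

Lemma euler_Y : euler * Yo = Yo * euler + Yo.
Proof.
have xdY m : x m * d m * Yo = Yo * (x m * d m) + c *: (g_ m * x m).
  by rewrite -mulrA d_Y mulrDr mulrA x_Y -mulrA -scalerAr x_gl_comm.
rewrite mulr_suml (eq_bigr _ (fun m _ => xdY m)) big_split /= -scaler_sumr.
by rewrite sum_gl_x -mulr_sumr.
Qed.

Lemma d_H i : d i * Ho = Ho * d i - d i.
Proof.
rewrite H_euler mulrBr mulrBl mulrN mulNr d_euler mulr_algr mulr_algl.
by rewrite opprD addrAC.
Qed.

Lemma g_H i : GRing.comm (g i) Ho.
Proof.
by rewrite /GRing.comm H_euler mulrBr mulrBl mulrN mulNr g_euler mulr_algr mulr_algl.
Qed.

Lemma gl_H i : GRing.comm (g_ i) Ho.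
Proof. by apply/commr_sym/commr_lincomb => l; exact/commr_sym/g_H. Qed.

Lemma H_Y : Ho * Yo = Yo * (Ho - 1).
Proof.
rewrite H_euler mulrBl mulrBr mulNr euler_Y [_%:A * _]comm_alg mulr1 mulrBr mulrN.
by rewrite opprD addrAC.
Qed.

Lemma Hshift_Y (a : int) k :
  (Ho + a%:~R) * Yo ^+ k = Yo ^+ k * (Ho + (a - k%:Z)%:~R).
Proof.
elim: k => [|k IHk]; first by rewrite expr0 mul1r mulr1 subr0.
rewrite exprSr mulrA IHk -mulrA mulrDl H_Y -(commr_int Yo) -mulrDr mulrA.
congr (_ * _); rewrite intS opprD addrA !intrB -addrA; congr (_ + _).
by rewrite addrCA addrA.
Qed.

Hypothesis H_shift_unit : forall k : int, Ho + k%:~R \is a GRing.unit.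

Lemma H_unit : Ho \is a GRing.unit.
Proof. by have := H_shift_unit 0; rewrite addr0. Qed.

Lemma H1_unit : Ho + 1 \is a GRing.unit.
Proof. exact: (H_shift_unit 1). Qed.

Lemma Ymovable_Hinv (a : int) : Ymovable ((Ho + a%:~R)^-1).
Proof.
move=> k; exists (Ho + (a - k%:Z)%:~R)^-1.
by apply: conj_inv; [exact: Hshift_Y | exact: H_shift_unit | exact: H_shift_unit].
Qed.

Lemma Ymovable_H : Ymovable Ho^-1.
Proof. by have := Ymovable_Hinv 0; rewrite addr0. Qed.

Lemma Ymovable_H1 : Ymovable (Ho + 1)^-1.
Proof. exact: (Ymovable_Hinv 1). Qed.

Lemma Ymovable_phi k : Ymovable (phiH x d k).
Proof.
rewrite /phiH; elim/big_ind: _ => [||l _].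
- exact/Ymovable_comm/commr_sym/commr1.
- exact: Ymovable_mul.
apply: Ymovable_mul; first exact/Ymovable_comm/commr_sym/commrX/commrN1.
rewrite /kappaH; case: ifP => _; first exact: (Ymovable_Hinv ((l.+1)./2)%:Z).
exact/Ymovable_comm/commr_sym/commrV/commr_sym/comm_alg.
Qed.

Lemma phiH0 : phiH x d 0 = 1.
Proof. by rewrite /phiH big_geq. Qed.

Lemma phiH1 : phiH x d 1 = - (Ho + 1)^-1.
Proof. by rewrite /phiH big_nat1 /kappaH /= expr1 mulN1r. Qed.

Lemma phiH2 : phiH x d 2 = (Ho + 1)^-1.
Proof.
rewrite /phiH big_nat_recr //= big_nat1 /kappaH /= expr1 mulN1r.
by rewrite divff ?pnatr_eq0 // scaleN1r invrN1 sqrrN expr1n mul1r mulrN1 opprK.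
Qed.

(** * Diamond products of generators *)

Lemma absorbY_x i : absorbY 1 (x i).
Proof. by exists (x i); rewrite expr1 x_Y. Qed.

Lemma absorbY_xl i : absorbY 1 (x_ i).
Proof. by exists (x_ i); rewrite expr1 xl_Y. Qed.

Lemma absorbY_g j : absorbY 2 (g j).
Proof. exact: absorbYS (g_Y j) (absorbYZ _ (absorbY_x j)). Qed.

Lemma absorbY_gl i : absorbY 2 (g_ i).
Proof. exact: absorbYS (gl_Y i) (absorbYZ _ (absorbY_xl i)). Qed.

Lemma absorbY_d i : absorbY 3 (d i).
Proof. exact: absorbYS (d_Y i) (absorbYZ _ (absorbY_gl i)). Qed.

Lemma absorbX_d j : absorbX 1 (d j).
Proof. by exists (d j); rewrite expr1 X_d. Qed.

Lemma absorbX_du j : absorbX 1 (dU j).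
Proof. by exists (dU j); rewrite expr1 X_du. Qed.

Lemma absorbX_g j : absorbX 2 (g j).
Proof. exact: absorbXS (X_g j) (absorbXZ _ (absorbX_du j)). Qed.

Lemma d_H1inv i : d i * (Ho + 1)^-1 = Ho^-1 * d i.
Proof.
apply/esym/conj_inv; [|exact: H_unit|exact: H1_unit].
by rewrite mulrDr mulr1 d_H subrK.
Qed.

Lemma d_phiH1 i : d i * phiH x d 1 = - Ho^-1 * d i.
Proof. by rewrite phiH1 mulrN d_H1inv mulNr. Qed.

Lemma d_phiH2 i : d i * phiH x d 2 = Ho^-1 * d i.
Proof. by rewrite phiH2 d_H1inv. Qed.

Lemma g_phiH1 i : GRing.comm (g i) (phiH x d 1).
Proof. by rewrite phiH1; apply/commrN/commrV/commrD; [exact: g_H | exact: commr1]. Qed.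

Lemma gl_phiH1 i : GRing.comm (g_ i) (phiH x d 1).
Proof. by rewrite phiH1; apply/commrN/commrV/commrD; [exact: gl_H | exact: commr1]. Qed.

Lemma H_inv_split : Ho^-1 = Ho^-1 * (Ho + 1)^-1 + (Ho + 1)^-1.
Proof.
have -> : Ho^-1 * (Ho + 1)^-1 + (Ho + 1)^-1 = Ho^-1 * (Ho + 1) * (Ho + 1)^-1.
  by rewrite mulrDr mulVr ?H_unit // mulr1 addrC mulrDl mul1r.
by rewrite mulrK ?H1_unit.
Qed.

Lemma term0E a b : term 0 a b = a * b.
Proof. by rewrite /term phiH0 !expr0 !mulr1. Qed.

Variable N : nat.
Hypothesis N_ge3 : (3 <= N)%N.
Local Notation D a b := (dmd eta x d g N a b).

Lemma dmd_series k a b : (k <= 3)%N -> absorbY k a \/ absorbX k b ->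
  eqJ (D a b) (series k a b).
Proof. by move=> k3; apply: (series_absorb Ymovable_phi (leq_trans k3 N_ge3)). Qed.

Lemma dmd_absorb1 a b : absorbY 1 a \/ absorbX 1 b -> eqJ (D a b) (a * b).
Proof. by move/(@dmd_series 1 _ _ isT); rewrite /series big_ord1 term0E. Qed.

Lemma dmd_absorb2 a b : absorbY 2 a \/ absorbX 2 b -> eqJ (D a b) (a * b + term 1 a b).
Proof. by move/(@dmd_series 2 _ _ isT); rewrite /series !big_ord_recr big_ord0 /= add0r term0E. Qed.

Lemma dmd_absorbY3 a b : absorbY 3 a -> eqJ (D a b) (a * b + term 1 a b + term 2 a b).
Proof.
move=> /(@or_introl _ (absorbX 3 b)) /(@dmd_series 3 _ _ isT).
by rewrite /series !big_ord_recr big_ord0 /= add0r term0E.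
Qed.

Lemma dmd_d_g i j : eqJ (D (d i) (g j)) (d i * g j + Ho^-1 * g_ i * dU j).
Proof.
apply: eqJ_trans (dmd_absorb2 (or_intror (absorbX_g j))) (eqJ_add (eqJ_refl _) _).
apply: eqJ_congr (term1_reduce (d_phiH1 i) (YmovableN Ymovable_H) (d_Y i) (X_g j)) (eqJ_refl _) _.
by rewrite mulr_scale2 cXY_double scaleN1r !mulNr opprK.
Qed.

Lemma dmd_g_g i j : eqJ (D (g i) (g j)) (g i * g j + 2 *: ((Ho + 1)^-1 * x i * dU j)).
Proof.
apply: eqJ_trans (dmd_absorb2 (or_introl (absorbY_g i))) (eqJ_add (eqJ_refl _) _).
apply: eqJ_congr (term1_reduce (g_phiH1 i) (Ymovable_phi 1) (g_Y i) (X_g j)) (eqJ_refl _) _.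
by rewrite mulr_scale2 -[2 * c * (2 * c)]mulrA cXY_double mulrN1 phiH1 scaleNr !mulNr scalerN opprK.
Qed.

Lemma dmd_gl_g i j : eqJ (D (g_ i) (g j)) (g_ i * g j + 2 *: ((Ho + 1)^-1 * x_ i * dU j)).
Proof.
apply: eqJ_trans (dmd_absorb2 (or_introl (absorbY_gl i))) (eqJ_add (eqJ_refl _) _).
apply: eqJ_congr (term1_reduce (gl_phiH1 i) (Ymovable_phi 1) (gl_Y i) (X_g j)) (eqJ_refl _) _.
by rewrite mulr_scale2 -[2 * c * (2 * c)]mulrA cXY_double mulrN1 phiH1 scaleNr !mulNr scalerN opprK.
Qed.

Lemma dmd_g_x i j : eqJ (D (g i) (x j)) (g i * x j + (Ho + 1)^-1 * x i * g j).
Proof.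
apply: eqJ_trans (dmd_absorb2 (or_introl (absorbY_g i))) (eqJ_add (eqJ_refl _) _).
apply: eqJ_congr (term1_reduce (g_phiH1 i) (Ymovable_phi 1) (g_Y i) (X_x j)) (eqJ_refl _) _.
by rewrite mulr_scale2 [2 * c * c]mulrC cXY_double phiH1 scaleN1r !mulNr opprK.
Qed.

Lemma dmd_gl_x i j : eqJ (D (g_ i) (x j)) (g_ i * x j + (Ho + 1)^-1 * x_ i * g j).
Proof.
apply: eqJ_trans (dmd_absorb2 (or_introl (absorbY_gl i))) (eqJ_add (eqJ_refl _) _).
apply: eqJ_congr (term1_reduce (gl_phiH1 i) (Ymovable_phi 1) (gl_Y i) (X_x j)) (eqJ_refl _) _.
by rewrite mulr_scale2 [2 * c * c]mulrC cXY_double phiH1 scaleN1r !mulNr opprK.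
Qed.

Lemma dmd_d_x i j : eqJ (D (d i) (x j))
  (d i * x j + (1 / 2) *: (Ho^-1 * g_ i * g j) + Ho^-1 * x_ i * dU j).
Proof.
apply: eqJ_trans (dmd_absorbY3 (x j) (absorbY_d i)) (eqJ_add (eqJ_add (eqJ_refl _) _) _).
  apply: eqJ_congr (term1_reduce (d_phiH1 i) (YmovableN Ymovable_H) (d_Y i) (X_x j)) (eqJ_refl _) _.
  by rewrite mulr_scale2 cXY_sqr scaleNr !mulNr scalerN opprK.
apply: eqJ_congr (term2_reduce (d_phiH2 i) Ymovable_H (d_Y i) (Ycomm_scale c (gl_Y i))
                                (X_x j) (Xcomm_scale c (X_g j))) (eqJ_refl _) _.
by rewrite !scalerA mulr_scale2 cXY_double mulrN1 opprK scale1r.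
Qed.

Lemma Ymovable_2 : Ymovable 2%:R.
Proof. exact/Ymovable_comm/commr_sym/commr_nat. Qed.

Lemma dmd_comm_d_g i j :
  eqJ (D (d i) (g j) - D (g j) (d i)) (Ho^-1 * D (g_ i) (dU j)).
Proof.
apply: eqJ_congr (eqJ_sub (dmd_d_g i j) (dmd_absorb1 (or_intror (absorbX_d i))))
  (eqJ_mull Ymovable_H (dmd_absorb1 (or_intror (absorbX_du j)))) _.
by rewrite -gd_comm addrAC subrr add0r mulrA.
Qed.

Lemma dmd_anticomm_g_g i j :
  eqJ (D (g i) (g j) + D (g j) (g i))
      ((2 * eta i j)%:A + (Ho + 1)^-1 * (2%:R * (D (x j) (dU i) + D (x i) (dU j)))).
Proof.
have xdu k l : eqJ (D (x k) (dU l)) (x k * dU l) := dmd_absorb1 (or_introl (absorbY_x k)).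
apply: eqJ_congr (eqJ_add (dmd_g_g i j) (dmd_g_g j i))
  (eqJ_add (eqJ_refl _) (eqJ_mull Ymovable_H1 (eqJ_mull Ymovable_2 (eqJ_add (xdu j i) (xdu i j))))) _.
rewrite addrACA gg_anticomm subrK; congr (_ + _).
by rewrite -scalerDr addrC -!mulrA -mulrDr scaler_nat mulr_natl mulrnAr.
Qed.

Lemma dmd_comm_d_x i j :
  eqJ (D (d i) (x j) - D (x j) (d i))
      ((i == j)%:R + (2%:R * Ho)^-1 * D (g_ i) (g j) + (Ho + 1)^-1 * D (x_ i) (dU j)).
Proof.
have inv_2H : (2%:R * Ho)^-1 = (1 / 2 : R[i]) *: Ho^-1.
  by rewrite mulr_natl -scaler_nat invrZ ?H_unit ?mul1r // unitfE pnatr_eq0.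
have split_x_du : Ho^-1 * x_ i * dU j
    = Ho^-1 * (Ho + 1)^-1 * x_ i * dU j + (Ho + 1)^-1 * (x_ i * dU j).
  by rewrite {1}H_inv_split !mulrDl mulrA.
rewrite inv_2H.
apply: eqJ_congr (eqJ_sub (dmd_d_x i j) (dmd_absorb1 (or_introl (absorbY_x j))))
  (eqJ_add (eqJ_add (eqJ_refl _) (eqJ_mull (YmovableZ _ Ymovable_H) (dmd_gl_g i j)))
           (eqJ_mull Ymovable_H1 (dmd_absorb1 (or_introl (absorbY_xl i))))) _.
rewrite split_x_du dx_comm mulrDr -!scalerAl -scalerAr scalerA mul1r mulVf ?pnatr_eq0 //.
by rewrite scale1r !mulrA [x j * d i + _]addrC !(addrAC _ (x j * d i)) subrK !addrA.
Qed.

Lemma dmd_comm_g_x i j :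
  eqJ (D (g i) (x j) - D (x j) (g i)) ((Ho + 1)^-1 * D (x i) (g j)).
Proof.
apply: eqJ_congr (eqJ_sub (dmd_g_x i j) (dmd_absorb1 (or_introl (absorbY_x j))))
  (eqJ_mull Ymovable_H1 (dmd_absorb1 (or_introl (absorbY_x i)))) _.
by rewrite gx_comm addrAC subrr add0r mulrA.
Qed.

Lemma dmd_trace_x_d :
  eqJ (\sum_i D (x i) (d i)) ((- (n%:R / 2 : R[i]))%:A - Ho).
Proof.
apply: eqJ_congr (eqJ_sum (fun i => dmd_absorb1 (or_introl (absorbY_x i)))) (eqJ_refl _) _.
by rewrite H_euler scaleNr opprB addKr opprK.
Qed.

Lemma dmd_trace_g_d : inJ (\sum_i D (g i) (d i)).
Proof.
apply: eqJ_inJ (eqJ_sum (fun i => dmd_absorb1 (or_intror (absorbX_d i)))) _.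
have -> : \sum_i g i * d i = (c^-1)%:A * Xo.
  by rewrite mulr_algl /X scalerA mulVf ?cXY_neq0 // scale1r.
exact: inJ_X.
Qed.

Lemma dmd_trace_gl_x : inJ (\sum_i D (g_ i) (x i)).
Proof.
apply: eqJ_inJ (eqJ_sum (fun i => dmd_gl_x i i)) _.
have Y_sum : \sum_m g m * x_ m = Yo * (c^-1)%:A.
  by rewrite mulr_algr /Y scalerA mulVf ?cXY_neq0 // scale1r.
rewrite big_split /= sum_gl_x.
under eq_bigr => m _ do rewrite -mulrA -(g_xl_comm m m).
by rewrite -mulr_sumr Y_sum; apply: inJD; [|apply: inJ_mull Ymovable_H1 _]; exact: inJ_Y.
Qed.

End WeylCliffordDiamond.

Theorem theorem4p2 (R : realType) (n : nat) (eta : 'M[R[i]]_n)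
    (B : unitAlgType R[i]) (x d g : 'I_n -> B) :
  eta^T = eta -> eta \in unitmx ->
  WC_relations eta x d g ->
  (forall k : int, H x d + k%:~R \is a GRing.unit) ->
  let Hh := H x d in
  let D := fun N a b => dmd eta x d g N a b in
  exists N0 : nat, forall N : nat, (N0 <= N)%N ->
  [/\ forall i j : 'I_n,
        inII eta x d g
          (D N (d i) (g j) - D N (g j) (d i)
           - Hh^-1 * D N (gl eta g i) (du eta d j)),
      forall i j : 'I_n,
        inII eta x d g
          (D N (g i) (g j) + D N (g j) (g i)
           - ((2 * eta i j)%:A
              + (Hh + 1)^-1 * (2%:R * (D N (x j) (du eta d i) + D N (x i) (du eta d j))))),
      forall i j : 'I_n,
        inII eta x d g
          (D N (d i) (x j) - D N (x j) (d i)
           - ((i == j)%:R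
              + (2%:R * Hh)^-1 * D N (gl eta g i) (g j)
              + (Hh + 1)^-1 * D N (xl eta x i) (du eta d j)))
    & forall i j : 'I_n,
        inII eta x d g
          (D N (g i) (x j) - D N (x j) (g i)
           - (Hh + 1)^-1 * D N (x i) (g j))]
  /\ [/\ inII eta x d g
        (\sum_i D N (x i) (d i) - ((- (n%:R / 2 : R[i]))%:A - Hh)),
      inII eta x d g (\sum_i D N (g i) (d i))
    & inII eta x d g (\sum_i D N (gl eta g i) (x i))].
Proof.
move=> eta_symmetric eta_unit relations H_shift_unit Hh D.
exists 3%N => N N_ge3; rewrite {}/Hh {}/D.
split; split=> *; apply: inJ_inII.
- exact: dmd_comm_d_g.
- exact: dmd_anticomm_g_g.
- exact: dmd_comm_d_x.
- exact: dmd_comm_g_x.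
- exact: dmd_trace_x_d.
- exact: dmd_trace_g_d.
- exact: dmd_trace_gl_x.
Qed.
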